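(* Let $M$ be a multiway system and let $(f,g)$ be its growth rate, i.e. either $(f,g)=(1,1)$ if $M$ is finite or bounded, or $f,g:\mathbb{R}_{\geq 0}\to\mathbb{R}_{\geq 0}$ are a pair of tight bounds of the growth function $g_M$ if $M$ is unbounded. Then there exists a constant $c\in\mathbb{R}$ such that $f,g\in o(e^{cx})$.
   Context: A (string-based) multiway system is a triple $M=(R,s_{\text{init}},\Sigma)$ where $\Sigma$ is a finite alphabet, $R=\{r_1\to t_1,\dots,r_k\to t_k\}$ is a finite set of string replacement rules with $r_i,t_i\in\Sigma^*$, and $s_{\text{init}}\in\Sigma^*$. Its states graph is the directed graph whose vertices are the strings reachable from $s_{\text{init}}$, with an edge $u\to v$ whenever $v$ arises from $u$ by replacing one occurrence of some $r_i$ in $u$ by $t_i$. The growth function $g_M(n)$ ($n\in\mathbb{N}_+$) is the number of states whose shortest-path distance from $s_{\text{init}}$ in the states graph equals $n-1$ (so $g_M(1)=1$; each generation counts only newly appearing states). $M$ is finite if $g_M(n)=0$ for some $n$; bounded if it is not finite and $g_M$ is bounded; unbounded otherwise. For an unbounded system with growth function $a$, put $\overline{a}_n=\max\{a_k: k\le n\}$ and $\underline{a}_n=\max(\{a_k : k\le n,\ \forall l\ge k: a_l\ge a_k\}\cup\{1\})$. For $h:\mathbb{N}_+\to\mathbb{N}_+$ and infinite $S\subseteq\mathbb{N}_+$, the linear interpolation $L_S(h):\mathbb{R}_{\ge0}\to\mathbb{R}_{\ge0}$ is the polygonal chain starting at $(0,0)$ and passing through the points $(n,h(n))$, $n\in S$,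 in increasing order of $n$. Continuous $f,g:\mathbb{R}_{\ge0}\to\mathbb{R}_{\ge0}$ are tight bounds of $a$ if $f\in\Theta(L_{\mathbb{N}_+}(\overline{a}))$ and $g\in\Theta(L_{\mathbb{N}_+}(\underline{a}))$. Here $\mathcal{O},o,\Omega,\omega,\Theta$ are the usual asymptotic classes as $x\to\infty$. *)

From HB Require Import structures.
From mathcomp Require Import all_boot all_order all_algebra.
From mathcomp Require Import all_classical all_reals all_analysis.
Set Implicit Arguments. Unset Strict Implicit. Unset Printing Implicit Defensive.
Import Order.TTheory GRing.Theory Num.Theory.
Import numFieldNormedType.Exports.

Record mws (Sigma : finType) := MWS {
  mws_rules : seq (seq Sigma * seq Sigma);
  mws_init  : seq Sigma }.

Section MWS.
Variable Sigma : finType.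
Implicit Types (M : mws Sigma) (u v : seq Sigma).

Definition mws_step M u v : Prop :=
  exists x y r t, (r, t) \in mws_rules M /\ u = x ++ r ++ y /\ v = x ++ t ++ y.

Definition succs M u : seq (seq Sigma) :=
  undup (flatten [seq [seq take i u ++ rt.2 ++ drop (i + size rt.1) u
                        | i <- iota 0 (size u).+1 & take (size rt.1) (drop i u) == rt.1]
                 | rt <- mws_rules M]).

Fixpoint ball M (k : nat) : seq (seq Sigma) :=
  match k with
  | 0 => [:: mws_init M]
  | k'.+1 => undup (ball M k' ++ flatten (map (succs M) (ball M k')))
  end.

(* Growth function g_M(n), n >= 1: number of states at distance exactly n-1.
   (g_M 0 is a dummy value 0; only n >= 1 is meaningful.) *)
Definition growth M (n : nat) : nat :=
  match n with
  | 0 => 0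
  | 1 => 1
  | k.+2 => size (ball M k.+1) - size (ball M k)
  end.

Definition mws_finite M : Prop := exists n, (1 <= n)%N /\ growth M n = 0.
Definition mws_bounded M : Prop :=
  ~ mws_finite M /\ exists B, forall n, (1 <= n)%N -> (growth M n <= B)%N.
Definition mws_unbounded M : Prop := ~ mws_finite M /\ ~ mws_bounded M.

End MWS.

Definition upper_env (a : nat -> nat) (n : nat) : nat :=
  \max_(1 <= k < n.+1) a k.

Definition lower_env (a : nat -> nat) (n : nat) : nat :=
  maxn 1 (\max_(1 <= k < n.+1)
            (if `[< forall l, (k <= l)%N -> (a k <= a l)%N >] then a k else 0)).

Section Real.
Variable R : realType.
Local Open Scope classical_set_scope.
Local Open Scope ring_scope.

(* Linear interpolation L_{N_+}(h): polygonal chain through (0,0) and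
   (n, h n) for n >= 1; meaningful for x >= 0. *)
Definition lin_interp (h : nat -> nat) (x : R) : R :=
  let hz := fun k : nat => if k is 0 then 0 else (h k)%:R : R in
  let n := Num.truncn x in
  hz n + (x - n%:R) * (hz n.+1 - hz n).

Definition bigTheta (f h : R -> R) : Prop :=
  exists c1 c2 x0 : R, 0 < c1 /\ 0 < c2 /\
    forall x, x0 <= x -> c1 * `|h x| <= `|f x| /\ `|f x| <= c2 * `|h x|.

Definition little_o_exp (f : R -> R) (c : R) : Prop :=
  forall eps : R, 0 < eps ->
    exists x0 : R, forall x, x0 <= x -> `|f x| <= eps * expR (c * x).

(* f : R_{>=0} -> R_{>=0} continuous (represented on R, restricted to [0,oo)) *)
Definition nonneg_cont (f : R -> R) : Prop :=
  {within `[0, +oo[, continuous f} /\ forall x, 0 <= x -> 0 <= f x.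

Definition tight_bounds (a : nat -> nat) (f g : R -> R) : Prop :=
  nonneg_cont f /\ nonneg_cont g /\
  bigTheta f (lin_interp (upper_env a)) /\ bigTheta g (lin_interp (lower_env a)).

Definition growth_rate (Sigma : finType) (M : mws Sigma) (f g : R -> R) : Prop :=
  ((mws_finite M \/ mws_bounded M) /\ f = (fun _ => 1) /\ g = (fun _ => 1))
  \/ (mws_unbounded M /\ tight_bounds (growth M) f g).

End Real.

(* One rewriting step lengthens a string by at most D, the largest right-hand
   side of a rule, so every state at distance k from s_init has length at most
   |s_init| + k D.  There are at most (|Sigma|+1)^m strings of length at most m,
   hence g_M(n) <= B^n with B = (|Sigma|+1)^(|s_init| + D).  Both envelopes of
   g_M inherit this bound, so their linear interpolations, and the tight bounds
   f, g, are O(e^(B x)), which is o(e^((B+1) x)). *)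

From Pilot Require Import Defs.
From HB Require Import structures.
From mathcomp Require Import all_boot all_order all_algebra.
From mathcomp Require Import all_classical all_reals all_analysis.
From mathcomp Require Import zify lra.
Set Implicit Arguments. Unset Strict Implicit. Unset Printing Implicit Defensive.
Import Order.TTheory GRing.Theory Num.Theory.

Definition pad_none (T : Type) (n : nat) (s : seq T) : seq (option T) :=
  map Some s ++ nseq (n - size s) None.

Lemma size_pad_none (T : Type) n (s : seq T) : size s <= n -> size (pad_none n s) = n.
Proof. by rewrite size_cat size_map size_nseq => /subnKC. Qed.

Lemma pad_noneK (T : Type) n : cancel (@pad_none T n) (pmap id).
Proof.
move=> s; rewrite pmap_cat; have -> : pmap id (nseq (n - size s) None) = [::].
  by elim: (n - size s) => //.
by rewrite cats0; elim: s => //= x s ->.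
Qed.

Lemma size_uniq_bounded_seqs (T : finType) n (ss : seq (seq T)) :
  uniq ss -> {in ss, forall s, size s <= n} -> size ss <= #|T|.+1 ^ n.
Proof.
move=> uniq_ss ss_n.
pose pad s : n.-tuple (option T) := insubd [tuple of nseq n None] (pad_none n s).
have padK : {in ss, cancel pad (pmap id \o val)}.
  by move=> s /ss_n s_n /=; rewrite insubdK ?pad_noneK // -topredE /= size_pad_none.
rewrite -(size_map pad) -(card_uniqP _); last by rewrite (map_inj_in_uniq (can_in_inj padK)).
by rewrite -card_option -card_tuple max_card.
Qed.

Section StatesGraph.
Variables (Sigma : finType) (M : mws Sigma).

Definition max_rhs_size : nat := \max_(rt <- mws_rules M) size rt.2.

Lemma size_succs u v : v \in succs M u -> size v <= size u + max_rhs_size.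
Proof.
rewrite mem_undup => /flattenP [_ /mapP [rt rt_M ->] /mapP [i _ ->]].
have rt_le : size rt.2 <= max_rhs_size by exact: (leq_bigmax_seq _ rt_M).
rewrite !size_cat size_take_min size_drop.
(* [size u] and [size rt.2] occur at two convertible types here, which lia
   would otherwise treat as distinct atoms. *)
set U := size u; set t := size rt.2 in rt_le *; lia.
Qed.

Lemma size_mem_ball k s :
  s \in Defs.ball M k -> size s <= size (mws_init M) + k * max_rhs_size.
Proof.
elim: k s => [|k IHk] s /=; first by rewrite inE => /eqP ->; rewrite addn0.
rewrite mem_undup mem_cat => /orP [/IHk | /flattenP [_ /mapP [u /IHk u_k ->]]].
  by move/leq_trans; apply; rewrite leq_add2l leq_mul2r leqnSn orbT.
by move/size_succs/leq_trans; apply; rewrite mulSnr addnA leq_add2r.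
Qed.

Lemma uniq_ball k : uniq (Defs.ball M k).
Proof. by case: k => //= k; exact: undup_uniq. Qed.

Lemma size_ball k :
  size (Defs.ball M k) <= #|Sigma|.+1 ^ (size (mws_init M) + k * max_rhs_size).
Proof. exact: size_uniq_bounded_seqs (uniq_ball k) (@size_mem_ball k). Qed.

Definition growth_base : nat := #|Sigma|.+1 ^ (size (mws_init M) + max_rhs_size).

Lemma growth_base_gt0 : 0 < growth_base.
Proof. by rewrite expn_gt0. Qed.

Lemma growth_le_expn n : growth M n <= growth_base ^ n.
Proof.
case: n => [|[|k]] //; first by rewrite expn1 growth_base_gt0.
apply: leq_trans (leq_subr _ _) _; apply: leq_trans (size_ball _) _.
rewrite -expnM leq_pexp2l //; lia.
Qed.

End StatesGraph.

Section Envelopes.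
Variables (a b : nat -> nat).
Hypotheses (b_mono : {homo b : m n / m <= n}) (a_le_b : forall n, a n <= b n).

Lemma upper_env_le n : upper_env a n <= b n.
Proof.
apply/bigmax_leqP_seq => k; rewrite mem_index_iota ltnS => /andP [_ k_n] _.
exact: leq_trans (a_le_b k) (b_mono k_n).
Qed.

Lemma lower_env_le n : 0 < b n -> lower_env a n <= b n.
Proof.
move=> b_gt0; rewrite /lower_env geq_max b_gt0.
apply/bigmax_leqP_seq => k; rewrite mem_index_iota ltnS => /andP [_ k_n] _.
by case: ifP => // _; exact: leq_trans (a_le_b k) (b_mono k_n).
Qed.

End Envelopes.

Local Open Scope ring_scope.

Lemma norm_lerp_le (R : realDomainType) (x y t m : R) :
  0 <= x <= m -> 0 <= y <= m -> 0 <= t <= 1 -> `|x + t * (y - x)| <= m.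
Proof. by move=> /andP [? ?] /andP [? ?] /andP [? ?]; rewrite ger0_norm; nra. Qed.

Section Exponential.
Variable R : realType.

Lemma lin_interp_le_expn (h : nat -> nat) (B : nat) (x : R) :
  (0 < B)%N -> (forall n, h n <= B ^ n)%N -> 0 <= x ->
  `|lin_interp h x| <= (B ^ (Num.truncn x).+1)%:R.
Proof.
move=> B_gt0 h_le x_ge0; have /andP [n_le_x x_lt_n1] := truncn_itv x_ge0.
have hz_le k : (k <= (Num.truncn x).+1)%N ->
    0 <= (if k is 0 then 0 else (h k)%:R : R) <= (B ^ (Num.truncn x).+1)%:R.
  case: k => [|k] k_le; first by rewrite lexx ler0n.
  by rewrite ler0n ler_nat (leq_trans (h_le _)) ?leq_pexp2l.
apply: norm_lerp_le; [exact: hz_le (leqnSn _) | exact: hz_le (leqnn _) |].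
by rewrite subr_ge0 n_le_x lerBlDl natr1 ltW.
Qed.

Lemma expn_truncn_le_expR (B : nat) (x : R) :
  0 <= x -> (B ^ (Num.truncn x).+1)%:R <= expR B%:R * expR (B%:R * x).
Proof.
move=> x_ge0; have /andP [n_le_x _] := truncn_itv x_ge0.
have B_le_expR : B%:R <= expR (B%:R : R).
  by apply: le_trans (expR_ge1Dx _); rewrite lerDr.
rewrite natrX exprS ler_pM ?exprn_ge0 ?ler0n //.
apply: le_trans (_ : expR (B%:R : R) ^+ Num.truncn x <= _).
  by apply: lerXn2r; rewrite ?nnegrE ?ler0n ?expR_ge0.
by rewrite -expRM_natl ler_expR mulrC ler_wpM2l ?ler0n.
Qed.

Lemma bigTheta_lin_interp_expR (f : R -> R) (h : nat -> nat) (B : nat) :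
  (0 < B)%N -> (forall n, h n <= B ^ n)%N -> Defs.bigTheta f (lin_interp h) ->
  exists K x0 : R, forall x, x0 <= x -> `|f x| <= K * expR (B%:R * x).
Proof.
move=> B_gt0 h_le [c1 [c2 [x0 [_ [c2_gt0 f_theta]]]]].
exists (c2 * expR B%:R), (Num.max x0 0) => x; rewrite ge_max => /andP [x0_x x_ge0].
have [_ f_le] := f_theta x x0_x; apply: le_trans f_le _.
rewrite -mulrA ler_pM2l //.
exact: le_trans (lin_interp_le_expn _ h_le x_ge0) (expn_truncn_le_expR _ x_ge0).
Qed.

Lemma little_o_exp_of_bigO_expR (f : R -> R) (c c' K x0 : R) : c < c' ->
  (forall x, x0 <= x -> `|f x| <= K * expR (c * x)) -> little_o_exp f c'.
Proof.
move=> c_lt_c' f_le eps eps_gt0; set d := c' - c.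
have d_gt0 : 0 < d by rewrite subr_gt0.
exists (Num.max x0 (K / (eps * d))) => x; rewrite ge_max => /andP [x0_x Kx].
apply: le_trans (f_le x x0_x) _.
rewrite -[c' * x](@subrK _ (c * x)) -mulrBl expRD mulrA ler_wpM2r ?expR_ge0 //.
have K_le : K <= eps * (d * x) by rewrite mulrA mulrC -ler_pdivrMr ?mulr_gt0.
apply: (le_trans K_le); rewrite ler_wpM2l ?(ltW eps_gt0) //.
by apply: le_trans (expR_ge1Dx _); rewrite lerDr.
Qed.

End Exponential.

Theorem lemma1 (R : realType) (Sigma : finType) (M : mws Sigma) (f g : R -> R) :
  growth_rate M f g ->
  exists c : R, little_o_exp f c /\ little_o_exp g c.
Proof.
case=> [[_ [-> ->]] | [_ [_ [_ [f_theta g_theta]]]]].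
  exists 1; split; apply: (@little_o_exp_of_bigO_expR _ _ 0 1 1 0 ltr01) => x _;
  by rewrite normr1 mul0r expR0 mulr1.
pose B := growth_base M; have B_gt0 : (0 < B)%N := growth_base_gt0 M.
have B_mono : {homo expn B : m n / (m <= n)%N} by move=> m n; exact: leq_pexp2l.
have growth_le := growth_le_expn M.
have Bn_gt0 n : (0 < B ^ n)%N by rewrite expn_gt0 B_gt0.
have [Kf [xf f_le]] :=
  bigTheta_lin_interp_expR B_gt0 (upper_env_le B_mono growth_le) f_theta.
have [Kg [xg g_le]] := bigTheta_lin_interp_expR B_gt0
  (fun n => lower_env_le B_mono growth_le (Bn_gt0 n)) g_theta.
exists (B%:R + 1); have B_lt : B%:R < B%:R + 1 :> R by rewrite ltrDl.
by split; [exact: little_o_exp_of_bigO_expR B_lt f_le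
          | exact: little_o_exp_of_bigO_expR B_lt g_le].
Qed.
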